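(* Let $(p,\mathcal{D})$ be a GNS over an order $\mathcal{O}$, let $\mathcal{F}$ be a fundamental domain associated with $(p,\mathcal{D})$, and let $\Delta=\mathcal{N}\cdot\boldsymbol{\omega}$. Then $(p,\mathcal{D})$ has the finiteness property if and only if for each $a\in R(p,\mathcal{D})$ and each $\alpha\in\Delta$ we have $a+\alpha\in R(p,\mathcal{D})$.
   Context: $\mathbb{K}$ is a number field of degree $k$, $\mathcal{O}$ an order in $\mathbb{K}$ with $\mathbb{Z}$-basis $\omega_1=1,\ldots,\omega_k$, $\boldsymbol{\omega}=(\omega_1,\ldots,\omega_k)$. A GNS over $\mathcal{O}$ is a pair $(p,\mathcal{D})$ with $p\in\mathcal{O}[x]$ monic and $\mathcal{D}\subset\mathcal{O}$ a complete residue system modulo $p(0)$ containing $0$. $R(p,\mathcal{D})$ is the set of $a\in\mathcal{O}[x]$ with $a\equiv\sum_{j=0}^{\ell-1}d_jx^j\pmod p$ for some $\ell\in\mathbb{N}$, $d_j\in\mathcal{D}$; finiteness property means $R(p,\mathcal{D})=\mathcal{O}[x]$. A fundamental domain associated with $(p,\mathcal{D})$ is a bounded set $\mathcal{F}\subset\mathbb{R}^k$ with $\mathbb{R}^k=\mathcal{F}+\mathbb{Z}^k$ disjointly and $\mathcal{D}=\{p(0)\sum_j f_j\omega_j:(f_1,\ldots,f_k)\in\mathcal{F}\}\cap\mathcal{O}$. $\mathcal{N}=\{\mathbf{z}\in\mathbb{Z}^k:\overline{\mathcal{F}}\cap(\overline{\mathcal{F}}+\mathbf{z})\neq\emptyset\}$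 and $\mathcal{N}\cdot\boldsymbol{\omega}=\{\sum_j z_j\omega_j:\mathbf{z}\in\mathcal{N}\}$. *)

From Stdlib Require Import Reals ZArith.
From HB Require Import structures.
From mathcomp Require Import all_boot all_order all_algebra all_field.
Set Implicit Arguments. Unset Strict Implicit. Unset Printing Implicit Defensive.
Import Order.TTheory GRing.Theory Num.Theory.
Local Open Scope ring_scope.

Definition Z_of_int (z : int) : Z :=
  match z with Posz n => Z.of_nat n | Negz n => Z.opp (Z.of_nat n.+1) end.
Definition Rint (z : int) : R := IZR (Z_of_int z).
Definition Rrat (q : rat) : R := Rdiv (Rint (numq q)) (Rint (denq q)).

Section GNS.
Variables (L : fieldExtType rat) (k : nat) (omega : 'I_k -> L).

Definition omt : k.-tuple L := [tuple omega i | i < k].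

Definition is_basis : Prop := basis_of fullv omt.

Definition inO (x : L) : Prop :=
  exists z : 'I_k -> int, x = \sum_(i < k) ((z i)%:~R : rat) *: omega i.

Definition is_order_basis (hk : (0 < k)%N) : Prop :=
  [/\ is_basis, omega (Ordinal hk) = 1 &
      (forall x y, inO x -> inO y -> inO (x * y))].

Definition polyO (a : {poly L}) : Prop := forall i, inO a`_i.

Definition congO (m a b : L) : Prop := exists c, inO c /\ a - b = m * c.

Definition is_GNS (p : {poly L}) (D : L -> Prop) : Prop :=
  [/\ p \is monic, polyO p,
      (forall d, D d -> inO d) /\ D 0,
      (forall a, inO a -> exists d, D d /\ congO p`_0 a d) &
      (forall d1 d2, D d1 -> D d2 -> congO p`_0 d1 d2 -> d1 = d2)].

Definition inRpD (p : {poly L}) (D : L -> Prop) (a : {poly L}) : Prop :=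
  polyO a /\ exists ds : seq L, (forall d, d \in ds -> D d) /\
    exists q, polyO q /\ a - Poly ds = p * q.

Definition finiteness_property (p : {poly L}) (D : L -> Prop) : Prop :=
  forall a, polyO a -> inRpD p D a.

Definition Rvec := 'I_k -> R.

Definition bounded (F : Rvec -> Prop) : Prop :=
  exists B : R, forall f, F f -> forall i, Rle (Rabs (f i)) B.

Definition tiles (F : Rvec -> Prop) : Prop :=
  (forall x : Rvec, exists f (z : 'I_k -> int),
      F f /\ forall i, x i = Rplus (f i) (Rint (z i))) /\
  (forall f1 f2 (z1 z2 : 'I_k -> int), F f1 -> F f2 ->
      (forall i, Rplus (f1 i) (Rint (z1 i)) = Rplus (f2 i) (Rint (z2 i))) ->
      forall i, z1 i = z2 i).

(* omega-coordinates in K (x) R of p(0) * sum_j f_j omega_j *)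
Definition scaled_coord (p0 : L) (f : Rvec) (i : 'I_k) : R :=
  \big[Rplus/R0]_(j < k) Rmult (Rrat (coord omt i (p0 * omega j))) (f j).

(* D = { p(0) sum_j f_j omega_j : f in F } intersected with O *)
Definition digits_from_F (p : {poly L}) (D : L -> Prop) (F : Rvec -> Prop) : Prop :=
  forall d, D d <-> (inO d /\ exists f, F f /\
       forall i, Rrat (coord omt i d) = scaled_coord p`_0 f i).

Definition is_fundamental_domain (p : {poly L}) (D : L -> Prop) (F : Rvec -> Prop) : Prop :=
  [/\ bounded F, tiles F & digits_from_F p D F].

(* topological closure in R^k (sup-norm, equivalent to the usual one) *)
Definition closure (F : Rvec -> Prop) (x : Rvec) : Prop :=
  forall eps : R, Rlt R0 eps -> exists y, F y /\ forall i, Rlt (Rabs (Rminus (x i) (y i))) eps.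

Definition neighbors (F : Rvec -> Prop) (z : 'I_k -> int) : Prop :=
  exists x : Rvec, closure F x /\ closure F (fun i => Rminus (x i) (Rint (z i))).

Definition inDelta (F : Rvec -> Prop) (alpha : L) : Prop :=
  exists z, neighbors F z /\ alpha = \sum_(j < k) ((z j)%:~R : rat) *: omega j.

End GNS.

(** Conversely, R(p,D) contains 0 and
    is closed under a |-> x a (prepend the digit 0), so by induction on the
    degree it is all of O[x] once it is closed under adding every constant of
    O = Z^k . omega.  The z in Z^k for which adding z . omega preserves R(p,D)
    contain 0 and, by hypothesis, are closed under adding elements of N; they
    are all of Z^k because N generates Z^k as a monoid.  That is topological:
    if u lies in the tile F + z, then every point near u lies in a tile F + z'
    with z' - z in N (near u the tile indices range over a bounded box, and a
    tile whose closure misses u stays away from it).  Hence the points lying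
    in a tile with a reachable index form an open set with open complement,
    and connectedness of R^k, used along coordinate segments, concludes. *)

From Pilot Require Import Defs.
From Stdlib Require Import Reals Lra Lia Classical FunctionalExtensionality.
From HB Require Import structures.
From mathcomp Require Import all_boot all_order all_algebra all_field zify ssrZ.
Set Implicit Arguments. Unset Strict Implicit. Unset Printing Implicit Defensive.
Import Order.TTheory GRing.Theory Num.Theory.

Local Open Scope ring_scope.

Lemma Z_of_intE (a : int) : Defs.Z_of_int a = ssrZ.Z_of_int a.
Proof. by case: a => n //=; lia. Qed.

Lemma RintD (a b : int) : Rint (a + b) = Rplus (Rint a) (Rint b).
Proof. by rewrite /Rint !Z_of_intE -plus_IZR; congr IZR; lia. Qed.

Lemma RintN (a : int) : Rint (- a) = Ropp (Rint a).
Proof. by rewrite /Rint !Z_of_intE -opp_IZR; congr IZR; lia. Qed.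

Lemma RintB (a b : int) : Rint (a - b) = Rminus (Rint a) (Rint b).
Proof. by rewrite RintD RintN. Qed.

Lemma Rint_nat (n : nat) : Rint n%:Z = INR n.
Proof. by rewrite INR_IZR_INZ. Qed.

Lemma Rint_le (a b : int) : Rle (Rint a) (Rint b) -> a <= b.
Proof. by rewrite /Rint !Z_of_intE => /le_IZR; lia. Qed.

Local Close Scope ring_scope.
Local Open Scope R_scope.

Lemma Rabs_le_inv (x b : R) : Rabs x <= b -> - b <= x <= b.
Proof. by rewrite /Rabs; case: Rcase_abs; lra. Qed.

Lemma monotone_witness_in_range (A : R -> int -> Prop) :
  (forall d1 d2 m, 0 < d1 -> d1 <= d2 -> A d1 m -> A d2 m) ->
  forall (n : nat) (lo : int),
  (forall d, 0 < d -> exists m, (lo <= m < lo + n%:Z)%R /\ A d m) ->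
  exists m, forall d, 0 < d -> A d m.
Proof.
move=> mono; elim=> [|n IH] lo H.
  by have [m [/andP [? ?] _]] := H 1 Rlt_0_1; lia.
case: (classic (forall d, 0 < d -> A d lo)) => [Hlo | /not_all_ex_not [d0 not_lo]].
  by exists lo.
have [hd0 nA] := imply_to_and _ _ not_lo.
apply: (IH (lo + 1)%R) => d hd.
have hmin : 0 < Rmin d d0 by apply: Rmin_pos.
have [m [/andP [hm hm'] Am]] := H _ hmin.
have ne : m <> lo by move=> e; apply: nA; rewrite -e; apply: mono hmin (Rmin_r _ _) Am.
exists m; split; first by apply/andP; split; lia.
exact: mono hmin (Rmin_l _ _) Am.
Qed.

Lemma monotone_witness_bounded (A : R -> int -> Prop) (M : R) :
  (forall d1 d2 m, 0 < d1 -> d1 <= d2 -> A d1 m -> A d2 m) ->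
  (forall d, 0 < d -> exists m, Rabs (Rint m) <= M /\ A d m) ->
  exists m, forall d, 0 < d -> A d m.
Proof.
move=> mono H; have [n hn] := INR_archimed 1 M Rlt_0_1.
apply: (monotone_witness_in_range (n := (n + n).+1) (lo := (- n%:Z)%R) mono) => d hd.
have [m [/Rabs_le_inv hm Am]] := H d hd.
have lo_m : (- n%:Z <= m)%R by apply: Rint_le; rewrite RintN Rint_nat; lra.
have m_hi : (m <= n%:Z)%R by apply: Rint_le; rewrite Rint_nat; lra.
by exists m; split=> //; apply/andP; split; lia.
Qed.

Lemma monotone_vector_witness k (P : R -> ('I_k -> int) -> Prop) (M : 'I_k -> R) :
  (forall d1 d2 z, 0 < d1 -> d1 <= d2 -> P d1 z -> P d2 z) ->
  (forall d, 0 < d -> exists z, P d z /\ forall i, Rabs (Rint (z i)) <= M i) ->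
  exists w, forall d, 0 < d -> P d w.
Proof.
move=> mono H.
pose agree j w d z := [/\ P d z, forall i, Rabs (Rint (z i)) <= M i
                        & forall i : 'I_k, (i < j)%N -> z i = w i].
suff /(_ k (leqnn k)) [w Hw] :
    forall j, (j <= k)%N -> exists w, forall d, 0 < d -> exists z, agree j w d z.
  exists w => d hd; have [z [Pz _ e]] := Hw d hd.
  suff -> : w = z by [].
  by apply: functional_extensionality => i; rewrite e.
elim=> [|j IH] hj.
  exists (fun _ => 0%R) => d hd.
  by have [z [Pz bz]] := H d hd; exists z.
have [w Hw] := IH (ltnW hj); pose ij := Ordinal hj.
have [m Hm] : exists m, forall d, 0 < d -> exists z, agree j w d z /\ z ij = m.
  apply: (monotone_witness_bounded (M := M ij)).
    move=> d1 d2 m hd1 hd12 [z [[Pz bz e] zm]].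
    by exists z; split=> //; split=> //; apply: mono hd1 hd12 Pz.
  move=> d hd; have [z [Pz bz e]] := Hw d hd.
  by exists (z ij); split; [exact: bz | exists z].
exists (fun i => if i == ij then m else w i) => d hd.
have [z [[Pz bz e] zm]] := Hm d hd; exists z; split=> // i.
case: eqP => [-> //| ne]; rewrite ltnS leq_eqVlt => /orP [/eqP eij|]; last exact: e.
by case: ne; apply: val_inj.
Qed.

Lemma locally_constant_01 (Q : R -> Prop) :
  (forall t, exists e, 0 < e /\ forall s, Rabs (s - t) < e -> (Q t <-> Q s)) ->
  Q 0 -> Q 1.
Proof.
move=> Hloc Q0.
pose E t := 0 <= t <= 1 /\ forall s, 0 <= s <= t -> Q s.
have E0 : E 0 by split=> [|s hs]; [lra | have -> : s = 0 by lra].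
have E_bounded : bound E by exists 1 => t [[_ ?] _].
have [T [ubT lubT]] := completeness E E_bounded (ex_intro _ 0 E0).
have T0 : 0 <= T by apply: ubT.
have [e [he He]] := Hloc T.
have [t [Et Tt]] : exists t, E t /\ T - e < t.
  apply: NNPP => hn; suff : T <= T - e by lra.
  by apply: lubT => t Et; apply: Rnot_lt_le => h; apply: hn; exists t.
have tT : t <= T by apply: ubT.
have [[t0 _] Qt] := Et.
have near_T s : Rabs (s - T) < e -> Q s.
  have tT_close : Rabs (t - T) < e by apply: Rabs_def1; lra.
  have QT : Q T by apply/(He t tT_close); apply: Qt; lra.
  by move=> hs; apply/(He s hs).
pose s0 := Rmin 1 (T + e / 2).
have Es0 : E s0.
  have [s0_1 s0_T] : s0 <= 1 /\ s0 <= T + e / 2 by split; [apply: Rmin_l | apply: Rmin_r].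
  split=> [|s hs]; first by rewrite /s0 /Rmin; case: Rle_dec; lra.
  case: (Rle_dec s t) => hst; first by apply: Qt; lra.
  by apply: near_T; apply: Rabs_def1; lra.
have s0_1 : s0 = 1.
  by move: (ubT _ Es0); rewrite /s0 /Rmin; case: Rle_dec; lra.
by apply: (proj2 Es0); lra.
Qed.

Section Tiling.
Variables (k : nat) (F : Rvec k -> Prop) (B : R).
Hypothesis F_bounded : forall f, F f -> forall i, Rabs (f i) <= B.
Hypothesis F_tiles : tiles F.

Definition in_tile (u : Rvec k) (z : 'I_k -> int) :=
  exists f, F f /\ forall i, u i = f i + Rint (z i).

Lemma in_tile_exists u : exists z, in_tile u z.
Proof. by have [f [z [Ff H]]] := F_tiles.1 u; exists z, f. Qed.

Lemma in_tile_unique u z1 z2 : in_tile u z1 -> in_tile u z2 -> z1 = z2.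
Proof.
move=> [f1 [F1 H1]] [f2 [F2 H2]]; apply: functional_extensionality.
by apply: F_tiles.2 F1 F2 _ => i; rewrite -H1 -H2.
Qed.

Lemma neighborsN z : neighbors F z -> neighbors F (fun i => - z i)%R.
Proof.
move=> [x [Fx Fxz]]; exists (fun i => x i - Rint (z i)); split=> //.
suff -> : (fun i => x i - Rint (z i) - Rint (- z i)%R) = x by [].
by apply: functional_extensionality => i; rewrite RintN; ring.
Qed.

Lemma in_tile_near u zu : in_tile u zu -> exists d, 0 < d /\ forall v zv,
  (forall i, Rabs (v i - u i) < d) -> in_tile v zv ->
  neighbors F (fun i => zv i - zu i)%R.
Proof.
move=> [f [Ff Hf]]; apply: NNPP => no_d.
pose far d w := exists v, [/\ forall i, Rabs (v i - u i) < d, in_tile v w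
                          & ~ neighbors F (fun i => w i - zu i)%R].
(* By contradiction, some index [w] has tiles [F + w] arbitrarily close to [u]. *)
have [w Hw] : exists w, forall d, 0 < d -> far d w.
  apply: (monotone_vector_witness (M := fun i => Rabs (u i) + 1 + B)).
    move=> d1 d2 w _ hd12 [v [hv tv nv]]; exists v; split=> // i.
    exact: Rlt_le_trans (hv i) hd12.
  move=> d hd; have hmin : 0 < Rmin d 1 by apply: Rmin_pos; lra.
  have [v [zv [hv tv nv]]] : exists v zv, [/\ forall i, Rabs (v i - u i) < Rmin d 1,
      in_tile v zv & ~ neighbors F (fun i => zv i - zu i)%R].
    apply: NNPP => none; apply: no_d; exists (Rmin d 1); split=> // v zv hv tv.
    by apply: NNPP => nv; apply: none; exists v, zv.
  exists zv; split; first by exists v; split=> // i; apply: Rlt_le_trans (hv i) (Rmin_l _ _).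
  move=> i; have [g [Fg Hg]] := tv.
  have -> : Rint (zv i) = (v i - u i) + u i + - g i by rewrite Hg; ring.
  have := Rabs_triang (v i - u i + u i) (- g i); have := Rabs_triang (v i - u i) (u i).
  have := Rlt_le_trans _ _ _ (hv i) (Rmin_r d 1).
  by rewrite Rabs_Ropp; have := F_bounded Fg i; lra.
have [v [_ _ not_nb]] := Hw 1 Rlt_0_1; apply: not_nb.
exists (fun i => u i - Rint (zu i)); split.
  move=> eps he; exists f; split=> // i.
  by rewrite Hf; replace (f i + Rint (zu i) - Rint (zu i) - f i) with 0 by ring; rewrite Rabs_R0.
move=> eps he; have [v' [hv' [g [Fg Hg]] _]] := Hw eps he.
exists g; split=> // i; rewrite RintB Rabs_minus_sym.
by replace (g i - (u i - Rint (zu i) - (Rint (w i) - Rint (zu i)))) with (v' i - u i)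
  by (rewrite Hg; ring).
Qed.

Variable G : ('I_k -> int) -> Prop.
Hypothesis G0 : G (fun _ => 0%R).
Hypothesis G_add_neighbor : forall z n, G z -> neighbors F n -> G (fun i => z i + n i)%R.

Definition reachable u := forall z, in_tile u z -> G z.

Lemma reachable_locally_constant u : exists d, 0 < d /\ forall v,
  (forall i, Rabs (v i - u i) < d) -> (reachable u <-> reachable v).
Proof.
have [zu tu] := in_tile_exists u; have [d [hd near_u]] := in_tile_near tu.
exists d; split=> // v hv; have [zv tv] := in_tile_exists v.
have nb := near_u _ _ hv tv.
split=> [Ru z /(in_tile_unique tv) <- | Rv z /(in_tile_unique tu) <-].
  have := G_add_neighbor (Ru _ tu) nb.
  by congr G; apply: functional_extensionality => i; rewrite addrC subrK.
have := G_add_neighbor (Rv _ tv) (neighborsN nb).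
by congr G; apply: functional_extensionality => i; rewrite opprB addrC subrK.
Qed.

Lemma reachable_shift u (j : 'I_k) c :
  reachable u -> reachable (fun i => u i + (if i == j then c else 0)).
Proof.
pose gam t := fun i => u i + (if i == j then t * c else 0).
have gam0 : gam 0 = u.
  by apply: functional_extensionality => i; rewrite /gam; case: (i == j); ring.
have -> : (fun i => u i + (if i == j then c else 0)) = gam 1.
  by apply: functional_extensionality => i; rewrite /gam; case: (i == j); ring.
rewrite -{1}gam0; apply: (locally_constant_01 (Q := fun t => reachable (gam t))) => t.
have [d [hd Hd]] := reachable_locally_constant (gam t).
have hc : 0 < Rabs c + 1 by have := Rabs_pos c; lra.
exists (d / (Rabs c + 1)); split; first exact: Rdiv_lt_0_compat.
move=> s hs; apply: Hd => i; rewrite /gam; case: (i == j); last first.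
  by replace (u i + 0 - (u i + 0)) with 0 by ring; rewrite Rabs_R0.
replace (u i + s * c - (u i + t * c)) with ((s - t) * c) by ring.
have : Rabs (s - t) * (Rabs c + 1) < d.
  have -> : d = d / (Rabs c + 1) * (Rabs c + 1) by field; lra.
  exact: Rmult_lt_compat_r hc hs.
by rewrite Rabs_mult; have := Rabs_pos (s - t); nra.
Qed.

Lemma neighbors_generate z : G z.
Proof.
have [f [_ [Ff _]]] := F_tiles.1 (fun _ => 0).
have Rf : reachable f.
  move=> z' /(in_tile_unique (z1 := fun _ => 0%R)) <- //.
  by exists f; split=> // i; rewrite /Rint /=; ring.
have partial j : reachable (fun i => f i + (if (i < j)%N then Rint (z i) else 0)).
  elim: j => [|j IH]; first by have -> : (fun i => f i + 0) = f
    by apply: functional_extensionality => i; ring.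
  case: (ltnP j k) => hj; last first.
    have -> // : (fun i => f i + (if (i < j.+1)%N then Rint (z i) else 0)) =
      fun i => f i + (if (i < j)%N then Rint (z i) else 0).
    apply: functional_extensionality => i.
    by rewrite !(leq_trans (ltn_ord i) hj) ?(leq_trans (ltn_ord i) (leq_trans hj (leqnSn j))).
  have := reachable_shift (j := Ordinal hj) (c := Rint (z (Ordinal hj))) IH.
  congr reachable; apply: functional_extensionality => i.
  case: (eqVneq i (Ordinal hj)) => [-> /=|ne]; first by rewrite ltnn ltnSn; ring.
  have ne' : (i : nat) != j := ne.
  by rewrite ltnS [(i <= j)%N]leq_eqVlt (negbTE ne') /=; ring.
by apply: (partial k); exists f; split=> // i; rewrite ltn_ord.
Qed.

End Tiling.

Local Close Scope R_scope.
Local Open Scope ring_scope.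

Section DigitExpansions.
Variables (L : fieldExtType rat) (k : nat) (omega : 'I_k -> L).

Definition intcomb (z : 'I_k -> int) : L := \sum_(j < k) ((z j)%:~R : rat) *: omega j.

Lemma intcomb0 : intcomb (fun _ => 0) = 0.
Proof. by rewrite /intcomb big1 // => i _; rewrite scale0r. Qed.

Lemma intcombD z w : intcomb (fun i => z i + w i) = intcomb z + intcomb w.
Proof. by rewrite /intcomb -big_split; apply: eq_bigr => i _; rewrite intrD scalerDl. Qed.

Lemma inO0 : inO omega 0.
Proof. by exists (fun _ => 0); rewrite -[LHS]intcomb0. Qed.

Lemma inOD x y : inO omega x -> inO omega y -> inO omega (x + y).
Proof. by move=> [z ->] [w ->]; exists (fun i => z i + w i); rewrite -intcombD. Qed.

Lemma polyO_mulX a : polyO omega a -> polyO omega (a * 'X).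
Proof. by move=> aO i; rewrite coefMX; case: (i == 0)%N => //; apply: inO0. Qed.

Lemma polyO_addC a c : polyO omega a -> inO omega c -> polyO omega (a + c%:P).
Proof.
move=> aO cO i; rewrite coefD coefC; apply: inOD => //.
by case: (i == 0)%N => //; apply: inO0.
Qed.

Lemma polyO_ind (P : {poly L} -> Prop) :
  P 0 -> (forall a, P a -> P (a * 'X)) ->
  (forall a c, P a -> inO omega c -> P (a + c%:P)) ->
  forall a, polyO omega a -> P a.
Proof.
move=> P0 PX PC; elim/poly_ind => [//|a c IH] acO.
have aO : polyO omega a.
  by move=> i; have := acO i.+1; rewrite coefD coefMX coefC /= addr0.
have cO : inO omega c by have := acO 0%N; rewrite coefD coefMX coefC /= add0r.
exact: PC (PX _ (IH aO)) cO.
Qed.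

Variables (p : {poly L}) (D : L -> Prop).

Lemma inRpD0 : inRpD omega p D 0.
Proof.
have O0 : polyO omega 0 by move=> i; rewrite coef0; apply: inO0.
by split=> //; exists [::]; split=> //; exists 0; split=> //; rewrite subrr mulr0.
Qed.

Lemma inRpD_mulX a : D 0 -> inRpD omega p D a -> inRpD omega p D (a * 'X).
Proof.
move=> D0 [aO [ds [Dds [q [qO e]]]]]; split; first exact: polyO_mulX.
exists (0 :: ds); split; first by move=> d; rewrite in_cons => /orP [/eqP -> | /Dds].
exists (q * 'X); split; first exact: polyO_mulX.
by rewrite /= cons_poly_def polyC0 addr0 -mulrBl e mulrA.
Qed.

End DigitExpansions.

Theorem mainTheorem7 (L : fieldExtType rat) (k : nat) (hk : (0 < k)%N)
  (omega : 'I_k -> L) (p : {poly L}) (D : L -> Prop) (F : Rvec k -> Prop) :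
  is_order_basis omega hk ->
  is_GNS omega p D ->
  is_fundamental_domain omega p D F ->
  (finiteness_property omega p D <->
   forall (a : {poly L}) (alpha : L),
     inRpD omega p D a -> inDelta omega F alpha ->
     inRpD omega p D (a + alpha%:P)).
Proof.
move=> _ [_ _ [_ D0] _ _] [[B F_bounded] F_tiles _].
split=> [fin a alpha [aO _] [z [_ ->]] | Delta_closed].
  by apply/fin/polyO_addC => //; exists z.
have shift z a : inRpD omega p D a -> inRpD omega p D (a + (intcomb omega z)%:P).
  move: z a; apply: (neighbors_generate F_bounded F_tiles
    (G := fun z => forall a, inRpD omega p D a -> inRpD omega p D (a + (intcomb omega z)%:P))).
    by move=> a Ra; rewrite intcomb0 addr0.
  move=> z n Gz nb a Ra; rewrite intcombD polyCD addrA.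
  by apply: Delta_closed (Gz _ Ra) _; exists n.
apply: polyO_ind => [|a|a c Ra [z ->]]; [exact: inRpD0 | exact: inRpD_mulX | exact: shift].
Qed.
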